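(* The space of increasing normalized submodular setfunctions on Borel spaces, endowed with the pseudometric $d(\varphi_1,\varphi_2)=\sum_{k=1}^\infty 2^{-k}d_H^{(k)}(Q_k(\varphi_1),Q_k(\varphi_2))$, is compact.
   Context: A setfunction on a set-algebra $(J,\mathcal{B})$ is a map $\varphi\colon\mathcal{B}\to\mathbb{R}$ with $\varphi(\emptyset)=0$; on a Borel space, $\mathcal{B}$ is the Borel sigma-algebra. It is increasing if $X\subseteq Y$ implies $\varphi(X)\le\varphi(Y)$, submodular if $\varphi(X)+\varphi(Y)\ge\varphi(X\cap Y)+\varphi(X\cup Y)$, and normalized means taking values in $[0,1]$. For $k\in\mathbb{N}$ and a map $F\colon J\to[k]$ with $F^{-1}(i)\in\mathcal{B}$, the quotient $\varphi\circ F^{-1}$ is $A\mapsto\varphi(F^{-1}(A))$ on $2^{[k]}$; $Q_k(\varphi)\subseteq\mathbb{R}^{2^k}$ is the set of all such quotients. $d_H^{(k)}$ is the Hausdorff distance on subsets of Euclidean $\mathbb{R}^{2^k}$. *)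

From HB Require Import structures.
From mathcomp Require Import all_boot all_order all_algebra.
From mathcomp Require Import all_classical all_reals all_analysis.
Unset Implicit Arguments. Unset Printing Implicit Defensive.
Import Order.TTheory GRing.Theory Num.Theory.
Import numFieldNormedType.Exports.
Local Open Scope classical_set_scope.
Local Open Scope ring_scope.

(* A (standard) Borel space: a Polish space (separable, complete metric,
   Hausdorff) together with its Borel sigma-algebra. *)
Set Implicit Arguments.
Record borel_space (R : realType) := BorelSpace {
  bs_T :> pseudoMetricType R;
  bs_hausdorff : hausdorff_space bs_T;
  bs_complete : forall F : set_system bs_T,
      ProperFilter F -> cauchy F -> exists x : bs_T, F --> x;
  bs_separable : exists D : set bs_T, countable D /\ dense D }.
Unset Implicit Arguments.

Definition borel {R : realType} {J : borel_space R} (A : set J) : Prop :=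
  <<s [set: J], @open J >> A.

(* A setfunction on (J, Borel(J)) is represented as a total map on subsets
   of J; only its values on Borel sets matter. *)
Definition setfun {R : realType} (J : borel_space R) := set J -> R.

Definition increasing {R : realType} {J : borel_space R} (phi : setfun J) :=
  forall X Y, borel X -> borel Y -> X `<=` Y -> phi X <= phi Y.

Definition submodular {R : realType} {J : borel_space R} (phi : setfun J) :=
  forall X Y, borel X -> borel Y ->
    phi (X `&` Y) + phi (X `|` Y) <= phi X + phi Y.

Definition normalized {R : realType} {J : borel_space R} (phi : setfun J) :=
  forall X, borel X -> 0 <= phi X <= 1.

Definition inc_norm_submod {R : realType} {J : borel_space R} (phi : setfun J) :=
  [/\ phi set0 = 0, increasing phi, submodular phi & normalized phi].

(* Quotients: points of R^{2^k} are maps {set 'I_k} -> R. *)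
Definition quotient_of {R : realType} {J : borel_space R} (phi : setfun J)
    {k : nat} (F : J -> 'I_k) : {set 'I_k} -> R :=
  fun A => phi (F @^-1` [set i | i \in A]).

Definition Qk {R : realType} {J : borel_space R} (phi : setfun J) (k : nat)
    : set ({set 'I_k} -> R) :=
  [set quotient_of phi F | F in
     [set F : J -> 'I_k | forall i : 'I_k, borel (F @^-1` [set i])]].

Definition edist {R : realType} {k : nat} (x y : {set 'I_k} -> R) : R :=
  Num.sqrt (\sum_(A : {set 'I_k}) (x A - y A) ^+ 2).

Definition dH {R : realType} {k : nat} (X Y : set ({set 'I_k} -> R)) : R :=
  Num.max (sup [set inf [set edist x y | y in Y] | x in X])
          (sup [set inf [set edist x y | x in X] | y in Y]).

Definition dist_sf {R : realType} {J1 J2 : borel_space R}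
    (phi1 : setfun J1) (phi2 : setfun J2) : R :=
  limn (fun n => \sum_(1 <= k < n) ((2 ^- k : R) * dH (Qk phi1 k) (Qk phi2 k))).

(* Fix an ultrafilter U on nat finer than the cofinite filter.  Each J n is
   sent into the reals by a Borel map embed n with countable range: for each of
   the first n grid targets (k, m, e), e a point of the grid of mesh 1/(m+1) in
   [0,1]^(2^(k+1)), it records the part containing x of a chosen Borel
   (k+1)-partition of J n, namely one whose quotient is 1/(m+1)-close to e
   whenever such a partition exists.  The U-limit phi0 X of phi n (embed n^-1 X)
   is again increasing, normalized and submodular.  Pulling partitions of the
   reals back along embed n, every quotient of phi0 is approximated by quotients
   of phi n for U-many n; conversely, if U-many phi n have a quotient near a grid
   point e, reading the label of e off a real number gives a partition whose
   phi0-quotient is the U-limit of such quotients.  So every d_H^(k) term, hence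
   d (phi n, phi0), tends to 0 along U; as U refines the cofinite filter, 0 is a
   cluster value of this sequence and a subsequence converges to 0. *)
From Pilot Require Import Defs.
From HB Require Import structures.
From mathcomp Require Import all_boot all_order all_algebra.
From mathcomp Require Import all_classical all_reals all_analysis.
From mathcomp Require Import lra.
Import Order.TTheory GRing.Theory Num.Theory.
Import numFieldNormedType.Exports.
Local Open Scope classical_set_scope.
Local Open Scope ring_scope.

Section BorelSets.
Context {R : realType} {J : borel_space R}.
Implicit Types A B : set J.

Lemma borel0 : borel (set0 : set J).
Proof. exact: sigma_algebra0. Qed.

Lemma borelC A : borel A -> borel (~` A).
Proof. by move=> hA; rewrite -setTD; apply: sigma_algebraCD. Qed.

Lemma borelT : borel [set: J].
Proof. by rewrite -setC0; apply: borelC; exact: borel0. Qed.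

Lemma borel_bigcup (A : nat -> set J) : (forall i, borel (A i)) -> borel (\bigcup_i A i).
Proof. exact: sigma_algebra_bigcup. Qed.

Lemma borelU A B : borel A -> borel B -> borel (A `|` B).
Proof.
move=> hA hB; rewrite -bigcup2E; apply: borel_bigcup => i.
by rewrite /bigcup2; case: ifP => _ //; case: ifP => _ //; exact: borel0.
Qed.

Lemma borelI A B : borel A -> borel B -> borel (A `&` B).
Proof.
by move=> hA hB; rewrite -[A `&` B]setCK setCI; apply: borelC; apply: borelU; exact: borelC.
Qed.

Definition borel_fibres {T : countType} (f : J -> T) := forall t, borel (f @^-1` [set t]).

Lemma borel_fibres_preimage {T : countType} (f : J -> T) (P : set T) :
  borel_fibres f -> borel (f @^-1` P).
Proof.
move=> hf.
have -> : f @^-1` P = \bigcup_j if unpickle j is Some t then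
    (if `[< P t >] then f @^-1` [set t] else set0) else set0.
  apply/seteqP; split => [x /= Px|x [j _]].
    by exists (pickle (f x)) => //; rewrite pickleK; case: asboolP.
  by case: (unpickle j) => [t|] //; case: asboolP => // Pt /= ->.
apply: borel_bigcup => j; case: (unpickle j) => [t|]; last exact: borel0.
by case: asboolP => _; [exact: hf|exact: borel0].
Qed.

Lemma borel_fibres_comp {T T' : countType} (f : J -> T) (g : T -> T') :
  borel_fibres f -> borel_fibres (g \o f).
Proof. by move=> hf t; exact: (borel_fibres_preimage f (g @^-1` [set t]) hf). Qed.

Lemma borel_fibres_cst {T : countType} (c : T) : borel_fibres (fun _ : J => c).
Proof. by move=> t; rewrite preimage_cst; case: ifP => _; [exact: borelT|exact: borel0]. Qed.

Lemma borel_fibres_pair {T T' : countType} (f : J -> T) (g : J -> T') :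
  borel_fibres f -> borel_fibres g -> borel_fibres (fun x => (f x, g x)).
Proof.
move=> hf hg [u v].
have -> : (fun x => (f x, g x)) @^-1` [set (u, v)] = f @^-1` [set u] `&` g @^-1` [set v].
  by apply/seteqP; split => x /=; [case=> -> ->|case=> -> ->].
exact: borelI.
Qed.

Lemma borel_fibres_map {T : countType} (f : nat -> J -> T) (s : seq nat) :
  (forall t, borel_fibres (f t)) -> borel_fibres (fun x => [seq f t x | t <- s]).
Proof.
move=> hf; elim: s => [|a s IH] /=; first exact: borel_fibres_cst.
exact: (borel_fibres_comp _ (fun p : T * seq T => p.1 :: p.2) (borel_fibres_pair _ _ (hf a) IH)).
Qed.

End BorelSets.

Lemma real_cauchy_cvg (R : realType) (F : set_system R) :
  ProperFilter F -> cauchy F -> exists x : R, F --> x.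
Proof. by move=> PF cF; exists (lim F); apply: cauchy_cvg. Qed.

Lemma real_separable (R : realType) : exists D : set R, countable D /\ dense D.
Proof.
exists (range ratr); split; last exact: dense_rat.
exact: (sub_countable (card_image_le _ _) (countableP _)).
Qed.

Definition real_borel_space (R : realType) : borel_space R :=
  BorelSpace (@Rhausdorff R) (@real_cauchy_cvg R) (real_separable R).

Lemma borel_set1 {R : realType} (r : real_borel_space R) : borel [set r].
Proof.
rewrite -[[set r]]setCK; apply: borelC; apply: sub_sigma_algebra; apply: closed_openC.
exact: (accessible_closed_set1 (hausdorff_accessible (@Rhausdorff R))).
Qed.

Section ExtremaNonneg.
Context {R : realType}.
Implicit Types E : set R.

Lemma sup_ge0 E : (forall r, E r -> 0 <= r) -> 0 <= sup E.
Proof.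
move=> h; case: (pselect (has_sup E)) => [[[r Er] ub]|ns]; last by rewrite sup_out.
by apply: le_trans (h r Er) _; apply: ub_le_sup.
Qed.

Lemma inf_ge0 E : (forall r, E r -> 0 <= r) -> 0 <= inf E.
Proof.
move=> h; have [->|/set0P ne] := eqVneq E set0; first by rewrite inf0.
exact: lb_le_inf.
Qed.

Lemma sup_inf_le {T : Type} (X Y : set T) (d : T -> T -> R) (B : R) :
  0 <= B -> (forall x y, 0 <= d x y) ->
  (forall x, X x -> exists2 y, Y y & d x y <= B) ->
  sup [set inf [set d x y | y in Y] | x in X] <= B.
Proof.
move=> B0 d0 h.
have [->|/set0P ne] := eqVneq [set inf [set d x y | y in Y] | x in X] set0; first by rewrite sup0.
apply: ge_sup => // _ [x Xx <-]; have [y Yy dB] := h x Xx.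
apply: le_trans dB; apply: ge_inf; last by exists y.
by exists 0 => _ [z _ <-].
Qed.

End ExtremaNonneg.

Section HausdorffDistance.
Context {R : realType} {k : nat}.
Implicit Types (eta : R) (x y z : {set 'I_k} -> R) (X Y : set ({set 'I_k} -> R)).

Definition sup_close eta x y := forall A, `|x A - y A| <= eta.

Lemma sup_close_sym {eta x y} : sup_close eta x y -> sup_close eta y x.
Proof. by move=> h A; rewrite distrC. Qed.

Lemma sup_close_trans {e1 e2 x y z} :
  sup_close e1 x y -> sup_close e2 y z -> sup_close (e1 + e2) x z.
Proof.
move=> h1 h2 A; rewrite -[x A](subrK (y A)) -addrA.
by apply: le_trans (ler_normD _ _) _; apply: lerD.
Qed.

Lemma sup_close_le {e1 e2 x y} : e1 <= e2 -> sup_close e1 x y -> sup_close e2 x y.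
Proof. by move=> le h A; apply: le_trans (h A) le. Qed.

Lemma card_set_ord : #|{set 'I_k}| = (2 ^ k)%N.
Proof. by rewrite -cardsT -powersetT card_powerset cardsT card_ord. Qed.

Lemma edist_ge0 x y : 0 <= Defs.edist x y.
Proof. exact: sqrtr_ge0. Qed.

Lemma edist_le eta x y : 0 <= eta -> sup_close eta x y ->
  Defs.edist x y <= Num.sqrt (2 ^ k)%:R * eta.
Proof.
move=> e0 h; rewrite /Defs.edist -(ger0_norm e0) -sqrtr_sqr -sqrtrM ?ler0n //.
apply: ler_wsqrtr; rewrite mulr_natl -card_set_ord -sumr_const.
apply: ler_sum => A _; rewrite -real_normK ?num_real //.
by apply: lerXn2r; rewrite ?nnegrE ?normr_ge0 ?h.
Qed.

Lemma dH_ge0 X Y : 0 <= dH X Y.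
Proof.
rewrite /dH le_max sup_ge0 // => _ [x Xx <-].
by apply: inf_ge0 => _ [y Yy <-]; exact: edist_ge0.
Qed.

Lemma dH_le X Y eta : 0 <= eta ->
  (forall x, X x -> exists2 y, Y y & sup_close eta x y) ->
  (forall y, Y y -> exists2 x, X x & sup_close eta y x) ->
  dH X Y <= Num.sqrt (2 ^ k)%:R * eta.
Proof.
move=> e0 hXY hYX; have B0 : 0 <= Num.sqrt (2 ^ k)%:R * eta by rewrite mulr_ge0 ?sqrtr_ge0.
rewrite /dH ge_max; apply/andP; split.
  apply: sup_inf_le => // [x y|x Xx]; first exact: edist_ge0.
  by have [y Yy c] := hXY x Xx; exists y => //; apply: edist_le.
apply: (sup_inf_le Y X (fun y x => Defs.edist x y)) => // [y x|y Yy]; first exact: edist_ge0.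
by have [x Xx c] := hYX y Yy; exists x => //; apply: edist_le => //; apply: sup_close_sym.
Qed.

End HausdorffDistance.

Lemma ultra_cvg_itv01 {R : realType} {T : Type} (U : set_system T) {hU : UltraFilter U}
  (u : T -> R) : (forall t, 0 <= u t <= 1) -> exists L : R, u @ U --> L.
Proof.
move=> hu.
have [L [_ cl]] : `[(0:R), 1] `&` cluster (u @ U) !=set0.
  apply: segment_compact; change (U (u @^-1` `[(0:R), 1])).
  by apply: filterS filterT => t _ /=; rewrite in_itv /= hu.
exists L; apply/cvgrPdist_lt => e e0.
have [//|hC] := in_ultra_setVsetC [set t | `|L - u t| < e] hU.
have [r [/= hr br]] : [set r | ~ `|L - r| < e] `&` ball L e !=set0.
  by apply: cl; [exact: hC|exact: nbhsx_ballx].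
by [].
Qed.

Section Series.
Context {R : realType}.

Lemma psum_le_geometric (a : nat -> R) (C q : R) N : 0 <= C -> 0 < q < 1 ->
  (forall k, (0 < k)%N -> a k <= C * q ^+ k) -> \sum_(1 <= k < N) a k <= C / (1 - q).
Proof.
move=> C0 /andP[q0 q1] ha.
have q_lt1 : `|q| < 1 by rewrite ger0_norm ?ltW.
apply: le_trans (geometric_le_lim N C0 q0 q_lt1).
case: N => [|N]; first by rewrite /series /= !big_geq.
rewrite /series /= [X in _ <= X]big_ltn // -[X in X <= _]add0r.
apply: lerD; first by rewrite expr0 mulr1.
by apply: ler_sum_nat => k /andP[k0 _]; exact: ha.
Qed.

Lemma limn_psum_bounds (a : nat -> R) (B : R) : (forall k, (0 < k)%N -> 0 <= a k) ->
  (forall N, \sum_(1 <= k < N) a k <= B) ->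
  0 <= limn (fun N => \sum_(1 <= k < N) a k) <= B.
Proof.
move=> a0 aB; set S := fun N => _.
have psum_ge0 m n : (0 < m)%N -> 0 <= \sum_(m <= k < n) a k.
  move=> m0; rewrite big_nat_cond sumr_ge0 // => k /andP[/andP[mk _] _].
  exact/a0/(leq_trans m0 mk).
have S_nd : nondecreasing_seq S.
  move=> n m nm; rewrite /S; case: n nm => [|n] nm; first by rewrite big_geq // psum_ge0.
  by rewrite [X in _ <= X](@big_cat_nat _ _ _ n.+1) //= lerDl psum_ge0.
have S_cvg : cvgn S by apply: nondecreasing_is_cvgn => //; exists B => _ [N _ <-]; exact: aB.
by apply/andP; split; [apply: limr_ge|apply: limr_le] => //; apply: filterE => N;
  rewrite ?psum_ge0 ?aB.
Qed.

End Series.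

Lemma cluster_subseq_cvg {R : realType} (u : R ^nat) (a : R) :
  cluster (u @ \oo) a ->
  exists sigma : nat -> nat, (forall n, (sigma n < sigma n.+1)%N) /\ (u \o sigma) @ \oo --> a.
Proof.
move=> /cluster_eventuallyP hu.
have /choice[f hf] : forall p : nat * nat, exists n, (p.1 <= n)%N /\ `|a - u n| <= harmonic p.2.
  move=> [N j]; have [n Nn un] := hu (harmonic j) N (harmonic_gt0 j).
  by exists n.
pose fix sigma j := if j is j'.+1 then f ((sigma j').+1, j) else f (0, 0)%N.
have sigma_near j : `|a - u (sigma j)| <= harmonic j by case: j => [|j]; exact: (hf (_, _)).2.
exists sigma; split => [j|]; first exact: (hf ((sigma j).+1, j.+1)).1.
apply/cvgrPdist_le => e e0.
have [N _ hN] := cvgr_dist_le _ _ (@cvg_harmonic R) _ e0.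
exists N => // j /hN /=; rewrite sub0r normrN ger0_norm ?invr_ge0 // => h.
exact: le_trans (sigma_near j) h.
Qed.

Section QuotientSpaces.
Context {R : realType}.

Lemma Qk_itv01 {J : borel_space R} (p : setfun J) k x :
  inc_norm_submod p -> Qk p k x -> forall A, 0 <= x A <= 1.
Proof. by case=> _ _ _ hp [F hF <-] A; apply: hp; exact: borel_fibres_preimage. Qed.

Lemma Qk_cst {J : borel_space R} (p : setfun J) k : Qk p k.+1 (quotient_of p (fun=> ord0)).
Proof. by exists (fun=> ord0) => //; exact: borel_fibres_cst. Qed.

Lemma dH_Qk_le {J1 J2 : borel_space R} (p1 : setfun J1) (p2 : setfun J2) k :
  inc_norm_submod p1 -> inc_norm_submod p2 ->
  dH (Qk p1 k.+1) (Qk p2 k.+1) <= Num.sqrt (2 ^ k.+1)%:R.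
Proof.
move=> h1 h2; rewrite -[X in _ <= X]mulr1.
have close01 (x y : {set 'I_k.+1} -> R) : (forall A, 0 <= x A <= 1) ->
    (forall A, 0 <= y A <= 1) -> sup_close 1 x y.
  move=> hx hy A; have /andP[? ?] := hx A; have /andP[? ?] := hy A.
  by rewrite ler_norml; apply/andP; split; lra.
apply: dH_le => // [x Qx|y Qy].
  by exists (quotient_of p2 (fun=> ord0)); [exact: Qk_cst|apply: close01;
    [exact: Qk_itv01 h1 Qx|exact: Qk_itv01 h2 (Qk_cst _ _)]].
by exists (quotient_of p1 (fun=> ord0)); [exact: Qk_cst|apply: close01;
  [exact: Qk_itv01 h2 Qy|exact: Qk_itv01 h1 (Qk_cst _ _)]].
Qed.

Lemma halfpow_sqrt_le (q : R) k : 0 <= q -> 1 <= 2 * q ^+ 2 ->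
  2 ^- k * Num.sqrt (2 ^ k)%:R <= q ^+ k.
Proof.
move=> q0 hq; have -> : q = (2 * q) / 2 by lra.
have q2_0 : 0 <= 2 * q by rewrite mulr_ge0.
rewrite exprMn exprVn mulrC ler_wpM2r ?invr_ge0 ?exprn_ge0 //.
rewrite -[(2 * q) ^+ k]ger0_norm ?exprn_ge0 // -sqrtr_sqr natrX; apply: ler_wsqrtr.
by rewrite -exprM mulnC exprM; apply: lerXn2r; rewrite ?nnegrE ?exprn_ge0 // exprMn; lra.
Qed.

(* The k-th term is at most eta (7/8)^k for k <= K, and at most
   (3/4)^k = (6/7)^k (7/8)^k by the trivial bound for k > K. *)
Lemma dist_sf_le {J1 J2 : borel_space R} (p1 : setfun J1) (p2 : setfun J2) K (eta : R) :
  inc_norm_submod p1 -> inc_norm_submod p2 -> 0 <= eta ->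
  (forall k, (k < K)%N -> dH (Qk p1 k.+1) (Qk p2 k.+1) <= Num.sqrt (2 ^ k.+1)%:R * eta) ->
  0 <= dist_sf p1 p2 <= 8 * (eta + (6/7) ^+ K).
Proof.
move=> h1 h2 eta0 hK; set C := eta + (6/7) ^+ K.
have C0 : 0 <= C by rewrite addr_ge0 ?exprn_ge0 //; lra.
have -> : 8 * C = C / (1 - 7/8) by rewrite (_ : 1 - 7/8 = 8^-1) ?invrK 1?mulrC //; lra.
apply: limn_psum_bounds => [[|k] //= _|N].
  by rewrite mulr_ge0 ?dH_ge0 // invr_ge0 exprn_ge0.
apply: psum_le_geometric => //; first lra.
case=> [|k] //= _; have w0 : (0 : R) <= 2 ^- k.+1 by rewrite invr_ge0 exprn_ge0.
have [kK|Kk] := ltnP k K.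
  apply: le_trans (ler_wpM2l w0 (hK k kK)) _; rewrite mulrA mulrC.
  apply: le_trans (ler_wpM2l eta0 (halfpow_sqrt_le (7/8) k.+1 _ _)) _; rewrite ?expr2; try lra.
  by rewrite ler_wpM2r ?exprn_ge0 // /C lerDl exprn_ge0 //; lra.
apply: le_trans (ler_wpM2l w0 (dH_Qk_le p1 p2 k h1 h2)) _.
apply: le_trans (halfpow_sqrt_le (3/4) k.+1 _ _) _; rewrite ?expr2; try lra.
have -> : (3/4 : R) = 6/7 * (7/8) by lra.
rewrite exprMn ler_wpM2r ?exprn_ge0 //; try lra.
apply: (le_trans (y := (6/7) ^+ K)); first by apply: ler_wiXn2l; [lra|lra|exact: ltnW].
by rewrite /C lerDr.
Qed.

End QuotientSpaces.

Section Grid.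
Context {R : realType}.

Definition mesh (m : nat) : R := m.+1%:R^-1.

Lemma mesh_gt0 m : 0 < mesh m.
Proof. by rewrite invr_gt0 ltr0n. Qed.

Definition grid_point {k m : nat} (e : {ffun {set 'I_k} -> 'I_m.+2}) : {set 'I_k} -> R :=
  fun A => (e A)%:R * mesh m.

Lemma grid_approx k m (x : {set 'I_k} -> R) : (forall A, 0 <= x A <= 1) ->
  exists e : {ffun {set 'I_k} -> 'I_m.+2}, sup_close (mesh m) x (grid_point e).
Proof.
move=> hx; set M : R := m.+1%:R; have M0 : 0 < M by rewrite ltr0n.
exists [ffun A => inord (Num.truncn (x A * M))] => A; rewrite /grid_point /mesh -/M ffunE.
have /andP[x0 x1] := hx A; have xM0 : 0 <= x A * M by rewrite mulr_ge0 // ltW.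
have /andP[] := truncn_itv xM0; set t := Num.truncn _ => tr_le tr_gt.
rewrite inordK; last first.
  rewrite ltnS -(ler_nat R); apply: le_trans tr_le _.
  by rewrite -[X in _ <= X]mul1r ler_wpM2r // ltW.
have -> : x A = x A * M / M by rewrite mulfK // gt_eqF.
have Mi0 : 0 <= M^-1 by rewrite invr_ge0 ltW.
rewrite -mulrBl normrM [`|M^-1|]ger0_norm //.
rewrite -[X in _ <= X]mul1r ler_pM2r ?invr_gt0 //.
by rewrite ger0_norm ?subr_ge0 // lerBlDl; apply: ltW; rewrite natr1.
Qed.

End Grid.

Section UltraLimit.
Context {R : realType} (J : nat -> borel_space R) (phi : forall n, setfun (J n)).
Hypothesis phi_ins : forall n, inc_norm_submod (phi n).
Context (U : set_system nat) {hU : UltraFilter U}.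
Hypothesis U_cofinite : \oo `<=` U.

Let R1 := real_borel_space R.

Definition approximating n k m (e : {ffun {set 'I_k.+1} -> 'I_m.+2}) (F : J n -> 'I_k.+1) :=
  borel_fibres F /\ sup_close (mesh m) (quotient_of (phi n) F) (grid_point e).

Definition grid_partition n k m e : J n -> 'I_k.+1 :=
  if pselect (exists F, approximating n k m e F) is left h then projT1 (cid h) else fun=> ord0.

Lemma grid_partition_fibres n k m e : borel_fibres (grid_partition n k m e).
Proof.
rewrite /grid_partition; case: pselect => [h|_]; first by case: (projT2 (cid h)).
exact: borel_fibres_cst.
Qed.

Lemma grid_partitionP n k m e : (exists F, approximating n k m e F) ->
  approximating n k m e (grid_partition n k m e).
Proof. by rewrite /grid_partition; case: pselect => // h _; exact: (projT2 (cid h)). Qed.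

Definition grid_index := {k : nat & {m : nat & {ffun {set 'I_k.+1} -> 'I_m.+2}}}.

Definition grid_code k m (e : {ffun {set 'I_k.+1} -> 'I_m.+2}) : nat :=
  pickle (existT _ k (existT _ m e) : grid_index).

Definition label n (t : nat) (x : J n) : nat :=
  if unpickle t : option grid_index is Some (existT k (existT m e))
  then val (grid_partition n k m e x) else 0%N.

Lemma label_fibres n t : borel_fibres (label n t).
Proof.
rewrite /label; case: (unpickle t : option grid_index) => [[k [m e]]|].
  exact: (borel_fibres_comp _ val (grid_partition_fibres n k m e)).
exact: borel_fibres_cst.
Qed.

Lemma label_grid_code n k m e x : label n (grid_code k m e) x = grid_partition n k m e x.
Proof. by rewrite /label /grid_code pickleK. Qed.

Definition embed n (x : J n) : R1 := (pickle [seq label n t x | t <- iota 0 n])%:R.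

Lemma embed_fibres_comp n {T : countType} (F : R1 -> T) : borel_fibres (F \o embed n).
Proof.
exact: (borel_fibres_comp _ (fun s => F (pickle s)%:R) (borel_fibres_map _ _ (label_fibres n))).
Qed.

Lemma borel_embed_preimage n (X : set R1) : borel (embed n @^-1` X).
Proof.
exact: (borel_fibres_preimage _ [set s | X (pickle s)%:R]
  (borel_fibres_map _ _ (label_fibres n))).
Qed.

Definition phi_embed (X : set R1) n : R := phi n (embed n @^-1` X).

Lemma phi_embed_itv01 X n : 0 <= phi_embed X n <= 1.
Proof. by case: (phi_ins n) => _ _ _; apply; exact: borel_embed_preimage. Qed.

Definition phi0 : setfun R1 := fun X => lim (phi_embed X @ U).

Lemma phi0_cvg X : phi_embed X @ U --> phi0 X.
Proof.
have [L hL] := ultra_cvg_itv01 U (phi_embed X) (phi_embed_itv01 X).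
by rewrite /phi0 (cvg_lim (@Rhausdorff R) hL).
Qed.

Lemma phi0_inc_norm_submod : inc_norm_submod phi0.
Proof.
split.
- rewrite /phi0; have -> : phi_embed set0 = fun=> 0.
    by apply/funext => n; rewrite /phi_embed preimage_set0; case: (phi_ins n).
  exact: (cvg_lim (@Rhausdorff R) (cvg_cst 0)).
- move=> X Y _ _ XY; apply: (ler_cvg_to (phi0_cvg X) (phi0_cvg Y)).
  apply: filterE => n; case: (phi_ins n) => _ inc _ _.
  by apply: inc; [exact: borel_embed_preimage|exact: borel_embed_preimage|exact: preimage_subset].
- move=> X Y _ _; apply: (ler_cvg_to (cvgD (phi0_cvg (X `&` Y)) (phi0_cvg (X `|` Y)))
    (cvgD (phi0_cvg X) (phi0_cvg Y))).
  apply: filterE => n; case: (phi_ins n) => _ _ sub _.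
  have := sub _ _ (borel_embed_preimage n X) (borel_embed_preimage n Y).
  by rewrite -preimage_setI -preimage_setU.
- move=> X _; have X01 := phi_embed_itv01 X.
  apply/andP; split.
    by apply: (ler_cvg_to (cvg_cst 0) (phi0_cvg X)); apply: filterE => n; case/andP: (X01 n).
  by apply: (ler_cvg_to (phi0_cvg X) (cvg_cst (1 : R))); apply: filterE => n; case/andP: (X01 n).
Qed.

Definition unembed (r : R1) : seq nat :=
  if pselect (exists s : seq nat, r = (pickle s)%:R) is left h then projT1 (cid h) else [::].

Lemma unembed_pickle s : unembed (pickle s)%:R = s.
Proof.
rewrite /unembed; case: pselect => [h|nh]; last by exfalso; apply: nh; exists s.
by case: (cid h) => s' /= /eqP; rewrite eqr_nat => /eqP /(pcan_inj pickleK).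
Qed.

Lemma borel_pickle_range : borel (range (fun s : seq nat => (pickle s)%:R : R1)).
Proof.
have -> : range (fun s : seq nat => (pickle s)%:R : R1) =
    \bigcup_j [set ((pickle (odflt [::] (unpickle j : option (seq nat))))%:R : R1)].
  apply/seteqP; split => [_ [s _ <-]|r [j _ ->]]; last by eexists.
  by exists (pickle s) => //; rewrite pickleK.
by apply: borel_bigcup => j; exact: borel_set1.
Qed.

Lemma unembed_fibres : borel_fibres unembed.
Proof.
move=> s.
have -> : unembed @^-1` [set s] = [set (pickle s)%:R : R1] `|`
    (if s == [::] then ~` range (fun s : seq nat => (pickle s)%:R : R1) else set0).
  apply/seteqP; split => r /=.
    rewrite /unembed; case: pselect => [h|nh].
      by case: (cid h) => s' /= -> ->; left.
    by move=> <-; right => -[s' _ rs]; apply: nh; exists s'.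
  case=> [->|]; first exact: unembed_pickle.
  case: eqP => [-> nr|//]; rewrite /unembed; case: pselect => // -[s' rs].
  by exfalso; apply: nr; exists s'.
apply: borelU; first exact: borel_set1.
by case: eqP => _; [apply: borelC; exact: borel_pickle_range|exact: borel0].
Qed.

Definition read_label k t (r : R1) : 'I_k.+1 := inord (nth 0%N (unembed r) t).

Lemma read_label_fibres k t : borel_fibres (read_label k t).
Proof. exact: (borel_fibres_comp _ (fun s => inord (nth 0%N s t) : 'I_k.+1) unembed_fibres). Qed.

Lemma read_label_embed k m e n : (grid_code k m e < n)%N ->
  read_label k (grid_code k m e) \o embed n = grid_partition n k m e.
Proof.
move=> tn; apply/funext => x /=; rewrite /read_label unembed_pickle.
by rewrite (nth_map 0%N) ?size_iota // nth_iota // add0n label_grid_code inord_val.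
Qed.

Lemma quotient_embed_near k (F : real_borel_space R -> 'I_k) (eps : R) : 0 < eps ->
  U [set n | sup_close eps (quotient_of phi0 F) (quotient_of (phi n) (F \o embed n))].
Proof.
move=> eps0; apply: filter_forall => A.
by apply: cvgr_dist_le eps0; exact: phi0_cvg.
Qed.

Lemma phi0_quotients_approx k m : U [set n | forall x, Qk phi0 k.+1 x ->
  exists2 z, Qk (phi n) k.+1 z & sup_close (3 * mesh m) x z].
Proof.
pose hit (e : {ffun {set 'I_k.+1} -> 'I_m.+2}) :=
  exists2 x, Qk phi0 k.+1 x & sup_close (mesh m) x (grid_point e).
have near_hit e : U [set n | hit e ->
    exists2 z, Qk (phi n) k.+1 z & sup_close (2 * mesh m) (grid_point e) z].
  have [[_ [F hF <-] cx]|nhit] := pselect (hit e); last by apply: filterE => n /nhit.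
  apply: filterS (quotient_embed_near _ F _ (mesh_gt0 m)) => n hn _.
  exists (quotient_of (phi n) (F \o embed n)).
    by exists (F \o embed n) => //; exact: embed_fibres_comp.
  by apply: sup_close_le (sup_close_trans (sup_close_sym cx) hn); lra.
apply: filterS (@filter_forall _ _ _ U _ near_hit) => n hn x Qx.
have [e cx] := grid_approx _ m _ (Qk_itv01 phi0 _ x phi0_inc_norm_submod Qx).
have [z Qz cz] := hn e (ex_intro2 _ _ x Qx cx).
by exists z => //; apply: sup_close_le (sup_close_trans cx cz); lra.
Qed.

Lemma grid_hit_limit k m (e : {ffun {set 'I_k.+1} -> 'I_m.+2}) :
  U [set n | exists2 z, Qk (phi n) k.+1 z & sup_close (mesh m) z (grid_point e)] ->
  exists2 x, Qk phi0 k.+1 x & sup_close (mesh m) x (grid_point e).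
Proof.
move=> Uhit; set F := read_label k (grid_code k m e).
exists (quotient_of phi0 F); first by exists F => //; exact: read_label_fibres.
move=> A; have Fcvg := phi0_cvg (F @^-1` [set i | i \in A]).
apply: (ler_cvg_to (cvg_norm (cvgB Fcvg (cvg_cst (grid_point e A)))) (cvg_cst (mesh m))).
have Ugt : U [set n | (grid_code k m e < n)%N] by apply: U_cofinite; exists (grid_code k m e).+1.
apply: filterS (filterI Uhit Ugt) => n [[_ [G hG <-] cG] tn] /=.
have := (grid_partitionP _ _ _ _ (ex_intro _ G (conj hG cG))).2 A.
by rewrite /quotient_of -(read_label_embed _ _ _ _ tn).
Qed.

Lemma phi_quotients_approx k m : U [set n | forall z, Qk (phi n) k.+1 z ->
  exists2 x, Qk phi0 k.+1 x & sup_close (3 * mesh m) z x].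
Proof.
pose hit (e : {ffun {set 'I_k.+1} -> 'I_m.+2}) :=
  [set n | exists2 z, Qk (phi n) k.+1 z & sup_close (mesh m) z (grid_point e)].
have near_hit e : U [set n | hit e n ->
    exists2 x, Qk phi0 k.+1 x & sup_close (mesh m) x (grid_point e)].
  have [Uhit|Unhit] := in_ultra_setVsetC (hit e) hU.
    by have [x Qx cx] := grid_hit_limit _ _ _ Uhit; apply: filterE => n _; exists x.
  by apply: (filterS _ Unhit) => n nhit /nhit [].
apply: filterS (@filter_forall _ _ _ U _ near_hit) => n hn z Qz.
have [e cz] := grid_approx _ m _ (Qk_itv01 (phi n) _ z (phi_ins n) Qz).
have [x Qx cx] := hn e (ex_intro2 _ _ z Qz cz).
exists x => //; apply: sup_close_le (sup_close_trans cz (sup_close_sym cx)).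
by have := @mesh_gt0 R m; lra.
Qed.

Lemma dH_phi_phi0_le k m : U [set n |
  dH (Qk (phi n) k.+1) (Qk phi0 k.+1) <= Num.sqrt (2 ^ k.+1)%:R * (3 * mesh m)].
Proof.
apply: filterS (filterI (phi0_quotients_approx k m) (phi_quotients_approx k m)) => n [ha hb].
by apply: dH_le => //; rewrite mulr_ge0 // ltW // mesh_gt0.
Qed.

Lemma dist_sf_phi0_cvg0 : (fun n => dist_sf (phi n) phi0) @ U --> 0.
Proof.
apply/cvgrPdist_le => eps eps0.
have q1 : `|6/7 : R| < 1 by rewrite ger0_norm; lra.
have e16 : 0 < eps / 16 by lra.
have e48 : 0 < eps / 48 by lra.
have [K _ /(_ K (leqnn K)) [/= hq hm]] :=
  filterI (cvgr_dist_le _ _ (cvg_expr q1) _ e16) (cvgr_dist_le _ _ (@cvg_harmonic R) _ e48).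
apply: filterS (@filter_forall _ _ _ U _ (fun k : 'I_K => dH_phi_phi0_le k K)) => n hn.
have /andP[d0 d_le] := dist_sf_le (phi n) phi0 K (3 * mesh K) (phi_ins n)
  phi0_inc_norm_submod ltac:(by rewrite mulr_ge0 // ltW // mesh_gt0)
  (fun k kK => hn (Ordinal kK)).
have q0 : (0 : R) <= 6/7 by lra.
move: hq hm; rewrite !sub0r !normrN ger0_norm ?exprn_ge0 //.
rewrite ger0_norm ?invr_ge0 // -/(mesh K) => hq hm.
by rewrite ger0_norm //; lra.
Qed.

End UltraLimit.

Theorem corollary3p11 (R : realType)
    (J : nat -> borel_space R) (phi : forall n, setfun (J n))
    (hphi : forall n, inc_norm_submod (phi n)) :
  exists (J0 : borel_space R) (phi0 : setfun J0),
    inc_norm_submod phi0 /\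
    exists sigma : nat -> nat,
      (forall n, (sigma n < sigma n.+1)%N) /\
      (fun n => dist_sf (phi (sigma n)) phi0) @ \oo --> (0 : R).
Proof.
have [U [hU U_cofinite]] := ultraFilterLemma (F := \oo) _.
have U_proper : ProperFilter U := ultra_proper.
exists (real_borel_space R), (phi0 J phi U); split; first exact: phi0_inc_norm_submod.
apply: (cluster_subseq_cvg (fun n => dist_sf (phi n) (phi0 J phi U))).
apply/cluster_eventuallyP => e N e0.
have UN : U [set n | (N <= n)%N] by apply: U_cofinite; exists N.
have Ue : U [set n | `|0 - dist_sf (phi n) (phi0 J phi U)| <= e].
  exact: cvgr_dist_le _ _ (dist_sf_phi0_cvg0 J phi hphi U U_cofinite) _ e0.
by have [n [dn Nn]] := filter_ex (filterI Ue UN); exists n.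
Qed.
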